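(* Let $\lambda>0$, let $A\in\mathbb{R}^{3\times3}$ have singular values $\lambda_1\le\lambda_2\le\lambda_3$, and set $\alpha=\lambda_2\lambda_3-\lambda\lambda_1$, $\beta=\lambda_1\lambda_3-\lambda\lambda_2$, $\gamma=\lambda_1\lambda_2-\lambda\lambda_3$. Then for every $R\in SO(3)$, the quantity $g(R)=(1-R_{11})\alpha+(1-R_{22})\beta+(1-R_{33})\gamma$ satisfies $$g(R)\ge\min\{2(\beta+\gamma),0\}.$$
   Context: Singular values of $A$ are the square roots of the eigenvalues of $A^TA$; $SO(3)$ is the group of $3\times3$ orthogonal matrices of determinant $1$; $R_{ij}$ is the $(i,j)$ entry of $R$. *)

From HB Require Import structures.
From mathcomp Require Import all_boot all_order all_algebra.
From mathcomp Require Import reals.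
Set Implicit Arguments. Unset Strict Implicit. Unset Printing Implicit Defensive.
Import Order.TTheory GRing.Theory Num.Theory.
Local Open Scope ring_scope.

(* Indices 1,2,3 of the paper are ordinals 0,1,2 of 'I_3. *)
Definition i1 : 'I_3 := @Ordinal 3 0 isT.
Definition i2 : 'I_3 := @Ordinal 3 1 isT.
Definition i3 : 'I_3 := @Ordinal 3 2 isT.

(* l1 <= l2 <= l3 are the singular values of A (with multiplicity):
   they are nonnegative and their squares are the eigenvalues of A^T A,
   i.e. the roots (with multiplicity) of the characteristic polynomial. *)
Definition singular_values3 (R : realType) (A : 'M[R]_3) (l1 l2 l3 : R) : Prop :=
  [/\ 0 <= l1, l1 <= l2, l2 <= l3 &
      char_poly (A^T *m A) =
        ('X - (l1 ^+ 2)%:P) * ('X - (l2 ^+ 2)%:P) * ('X - (l3 ^+ 2)%:P)].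

Definition SO3 (R : realType) (Q : 'M[R]_3) : Prop :=
  Q^T *m Q = 1%:M /\ \det Q = 1.

(* Write a, e, k for the diagonal of R.  The four numbers 1 + a + e + k,
   1 + a - e - k, 1 - a + e - k, 1 - a - e + k are of the form 1 + tr R' with
   R' in SO(3) (multiply R by a half-turn about a coordinate axis), and
   tr R' >= -1 on SO(3) because, by Newton's identity and adj R' = R'^T,
   tr(R'^2) = (tr R')^2 - 2 tr R' while tr(R'^2) <= tr(R'^T R') = 3.
   Writing 2 g(R) as a combination of the last three numbers with coefficients
   beta + gamma, alpha + gamma, alpha + beta, the ordering
   0 <= l1 <= l2 <= l3 (the only property of the singular values that is
   needed) gives alpha >= beta, gamma, so 2 g(R) >= s (beta + gamma), where
   s = 4 - (1 + tr R), the sum of the last three numbers, lies in [0, 4]. *)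
From HB Require Import structures.
From mathcomp Require Import all_boot all_order all_algebra.
From mathcomp Require Import reals ring lra.
Import Order.TTheory GRing.Theory Num.Theory.
Set Implicit Arguments. Unset Strict Implicit. Unset Printing Implicit Defensive.
Local Open Scope ring_scope.

Lemma adj_orthogonal (R : comPzRingType) (n : nat) (Q : 'M[R]_n) :
  Q^T *m Q = 1%:M -> \adj Q = \det Q *: Q^T.
Proof.
move=> orthoQ.
by rewrite -[\adj Q]mul1mx -orthoQ -mulmxA mul_mx_adj mul_mx_scalar.
Qed.

Lemma mxtrace_sqr3 (R : comPzRingType) (M : 'M[R]_3) :
  \tr (M *m M) = \tr M ^+ 2 - 2 * \tr (\adj M).
Proof.
have -> : M = \matrix_(i, j) M (inord i) (inord j).
  by apply/matrixP => i j; rewrite mxE !inord_val.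
rewrite /mxtrace !big_ord_recl !big_ord0 !mxE /cofactor.
rewrite !(expand_det_row _ ord0) !big_ord_recl !big_ord0.
by rewrite !mxE /cofactor !det_mx11 !mxE /=; ring.
Qed.

Lemma mxtrace_mul_le (R : realDomainType) (n : nat) (M : 'M[R]_n) :
  \tr (M *m M) <= \tr (M^T *m M).
Proof.
have trTM : \tr (M^T *m M) = \sum_i \sum_j M i j ^+ 2.
  rewrite /mxtrace exchange_big; apply: eq_bigr => i _; rewrite mxE.
  by apply: eq_bigr => j _; rewrite mxE expr2.
have trMM : \tr (M *m M) = \sum_i \sum_j M i j * M j i.
  by apply: eq_bigr => i _; rewrite mxE.
have skew_norm :
    \sum_i \sum_j (M i j - M j i) ^+ 2 = 2 * (\tr (M^T *m M) - \tr (M *m M)).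
  transitivity (\sum_i \sum_j (M i j ^+ 2 + M j i ^+ 2) - 2 * \tr (M *m M)).
    rewrite trMM mulr_sumr -sumrB; apply: eq_bigr => i _.
    by rewrite mulr_sumr -sumrB; apply: eq_bigr => j _; ring.
  under eq_bigr do rewrite big_split.
  by rewrite big_split /= [\sum_i \sum_j M j i ^+ 2]exchange_big /= -trTM; ring.
rewrite -subr_ge0 -(pmulr_rge0 _ (ltr0Sn R 1)) -skew_norm.
by apply: sumr_ge0 => i _; apply: sumr_ge0 => j _; apply: sqr_ge0.
Qed.

Lemma SO3_trace_ge (R : realType) (Q : 'M[R]_3) : SO3 Q -> -1 <= \tr Q.
Proof.
move=> [orthoQ detQ].
have tr_adj : \tr (\adj Q) = \tr Q.
  by rewrite adj_orthogonal // detQ scale1r mxtrace_tr.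
have := mxtrace_mul_le Q; rewrite orthoQ mxtrace_scalar mxtrace_sqr3 tr_adj.
by move=> ?; nra.
Qed.

Lemma SO3_mul (R : realType) (P Q : 'M[R]_3) : SO3 P -> SO3 Q -> SO3 (P *m Q).
Proof.
move=> [orthoP detP] [orthoQ detQ]; split; last by rewrite det_mulmx detP detQ mulr1.
by rewrite trmx_mul mulmxA -[Q^T *m P^T *m P]mulmxA orthoP mulmx1 orthoQ.
Qed.

Definition half_turn {R : pzRingType} {n : nat} (j : 'I_n) : 'M[R]_n :=
  diag_mx (\row_i (if i == j then 1 else -1)).

Lemma SO3_half_turn (R : realType) (j : 'I_3) : SO3 (half_turn j : 'M[R]_3).
Proof.
split.
  rewrite /half_turn tr_diag_mx mul_diag_mx; apply/matrixP => i k.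
  rewrite !mxE; case: (i == k); last by rewrite mulr0n mulr0.
  by case: (i == j); rewrite mulr1n ?mulrNN mulr1.
rewrite /half_turn det_diag !big_ord_recl big_ord0 !mxE.
by case: j => [[|[|[|]]]] //= _; ring.
Qed.

Lemma mxtrace_mul_half_turn (R : pzRingType) (n : nat) (Q : 'M[R]_n) (j : 'I_n) :
  \tr (Q *m half_turn j) = 2 * Q j j - \tr Q.
Proof.
rewrite /half_turn mul_mx_diag /mxtrace (bigD1 j) //= [\sum_i Q i i](bigD1 j) //=.
rewrite !mxE eqxx mulr1 opprD addrA mulr2n mulrDl mul1r addrK; congr (_ + _).
by rewrite -sumrN; apply: eq_bigr => i /negbTE nij; rewrite !mxE nij mulrN1.
Qed.

Lemma SO3_diag_trace_le (R : realType) (Q : 'M[R]_3) (j : 'I_3) :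
  SO3 Q -> \tr Q - 2 * Q j j <= 1.
Proof.
move=> SO3Q; have := SO3_trace_ge (SO3_mul SO3Q (SO3_half_turn R j)).
by rewrite mxtrace_mul_half_turn => ?; lra.
Qed.

Lemma mxtrace3 (R : pzRingType) (Q : 'M[R]_3) : \tr Q = Q i1 i1 + Q i2 i2 + Q i3 i3.
Proof.
rewrite /mxtrace !big_ord_recl big_ord0 addr0 addrA.
by congr (_ + _ + _); congr (Q _ _); apply: val_inj.
Qed.

Lemma weighted_diag_ge_min (R : realDomainType) (a e k alpha beta gamma : R) :
  -1 <= a + e + k -> e + k - a <= 1 -> a + k - e <= 1 -> a + e - k <= 1 ->
  beta <= alpha -> gamma <= alpha ->
  Num.min (2 * (beta + gamma)) 0 <= (1 - a) * alpha + (1 - e) * beta + (1 - k) * gamma.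
Proof.
move=> tr_ge flip1 flip2 flip3 le_ba le_ga.
have split_weights : 2 * ((1 - a) * alpha + (1 - e) * beta + (1 - k) * gamma) =
    (1 + a - e - k) * (beta + gamma) + (1 - a + e - k) * (alpha + gamma)
    + (1 - a - e + k) * (alpha + beta) by ring.
rewrite ge_min; apply/orP.
by have [bg_ge0|bg_lt0] := leP 0 (beta + gamma); [right|left]; nra.
Qed.

Theorem lemma4p4 (R : realType) (lam : R) (A : 'M[R]_3) (l1 l2 l3 : R)
  (hlam : 0 < lam) (hA : singular_values3 A l1 l2 l3) (Q : 'M[R]_3) (hQ : SO3 Q) :
  let alpha := l2 * l3 - lam * l1 in
  let beta := l1 * l3 - lam * l2 in
  let gamma := l1 * l2 - lam * l3 in
  (1 - Q i1 i1) * alpha + (1 - Q i2 i2) * beta + (1 - Q i3 i3) * gamma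
    >= Num.min (2 * (beta + gamma)) 0.
Proof.
have [l1_ge0 le_l12 le_l23 _] := hA.
have := SO3_trace_ge hQ; have := SO3_diag_trace_le i1 hQ.
have := SO3_diag_trace_le i2 hQ; have := SO3_diag_trace_le i3 hQ.
rewrite mxtrace3 => flip3 flip2 flip1 tr_ge; cbv zeta.
by apply: weighted_diag_ge_min; [lra | lra | lra | lra | nra | nra].
Qed.
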